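(* Consider a slotted system with diversity. There are $N$ users, $N_{sub}\ge2$ sub-carriers and slots $1,\dots,T$. In each slot the BS chooses one user via a user scheduling algorithm $\pi_u$ and one sub-carrier via a sub-carrier choosing algorithm $\pi_s$; these may be randomized and may depend on past adversarial actions. It then sends an update to the chosen user on the chosen sub-carrier. The adversary uses a blocking matrix $\sigma\in\{0,1\}^{N_{sub}\times T}$, where $\sigma_j(t)=0$ means sub-carrier $j$ is blocked in slot $t$. Feasibility means $\sum_{j,t}(1-\sigma_j(t))\le\alpha T$ and at most one sub-carrier is blocked per slot, where $0<\alpha<1$. Ages satisfy $a_i(1)=1$, $a_i(t+1)=1$ if user $i$ is chosen in slot $t$ on an unblocked sub-carrier, and $a_i(t+1)=a_i(t)+1$ otherwise. Let $\Delta^{\pi_u,\pi_s,\sigma}=\frac1T\sum_{t=1}^T\frac1N\sum_i\mathbb E[a_i(t)]$ and $\Delta^*(T)=\sup_\sigma\inf_{\pi_u,\pi_s}\Delta^{\pi_u,\pi_s,\sigma}$. Then $\liminf_{T\to\infty}\Delta^*(T)\ge\frac{N+1}{2}$. *)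

From HB Require Import structures.
From mathcomp Require Import all_boot all_order all_algebra.
From mathcomp Require Import all_classical all_reals.
From mathcomp Require Import ereal sequences.
Set Implicit Arguments. Unset Strict Implicit. Unset Printing Implicit Defensive.
Import Order.TTheory GRing.Theory Num.Theory.
Local Open Scope ring_scope.

(* Slots are numbered 1..T (natural numbers).
   A blocking pattern: sigma t j = false  <->  sub-carrier j blocked in slot t
   (i.e. sigma_j(t) = 0). Only the values at slots 1..T matter. *)
Definition blocking (Nsub : nat) := nat -> 'I_Nsub -> bool.

Definition feasible (R : realType) (Nsub T : nat) (alpha : R) (sigma : blocking Nsub) : Prop :=
  (((\sum_(1 <= t < T.+1) #|[set j : 'I_Nsub | ~~ sigma t j]|)%N)%:R <= alpha * T%:R)
  /\ (forall t, (1 <= t <= T)%N -> (#|[set j : 'I_Nsub | ~~ sigma t j]| <= 1)%N).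

(* A deterministic joint policy (pi_u, pi_s): in slot t it chooses a user and a
   sub-carrier as a function of the adversarial actions. *)
Definition det_policy (N Nsub : nat) := nat -> blocking Nsub -> 'I_N * 'I_Nsub.

Definition causal (N Nsub : nat) (f : det_policy N Nsub) : Prop :=
  forall t (s1 s2 : blocking Nsub),
    (forall s j, (s < t)%N -> s1 s j = s2 s j) -> f t s1 = f t s2.

(* age f sigma i n = a_i(n+1):  a_i(1) = 1,
   a_i(t+1) = 1 if user i is chosen in slot t on an unblocked sub-carrier,
   a_i(t+1) = a_i(t) + 1 otherwise. *)
Fixpoint age (N Nsub : nat) (f : det_policy N Nsub) (sigma : blocking Nsub)
    (i : 'I_N) (n : nat) : nat :=
  match n with
  | 0 => 1
  | n'.+1 =>
      let c := f n'.+1 sigma in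
      if (c.1 == i) && sigma n'.+1 c.2 then 1 else (age f sigma i n').+1
  end.

Definition avg_age (R : realType) (N Nsub T : nat) (f : det_policy N Nsub)
    (sigma : blocking Nsub) : R :=
  T%:R^-1 * \sum_(1 <= t < T.+1) (N%:R^-1 * \sum_(i < N) ((age f sigma i t.-1)%:R : R)).

(* Expected average age values achievable by (possibly randomized) causal
   policies against sigma: a randomized policy is a probability distribution
   (finite randomness Omega, weights p) over causal deterministic policies;
   the expectation is taken over that randomness. *)
Definition achievable (R : realType) (N Nsub T : nat) (sigma : blocking Nsub) : set R :=
  [set v | exists (Omega : finType) (p : Omega -> R) (pol : Omega -> det_policy N Nsub),
      (forall w, 0 <= p w) /\ \sum_(w : Omega) p w = 1 /\
      (forall w, causal (pol w)) /\
      v = \sum_(w : Omega) p w * @avg_age R N Nsub T (pol w) sigma].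

Definition Delta_star (R : realType) (N Nsub : nat) (alpha : R) (T : nat) : \bar R :=
  ereal_sup [set ereal_inf [set (v%:E) | v in @achievable R N Nsub T sigma]
            | sigma in [set sigma : blocking Nsub | feasible T alpha sigma]].

From HB Require Import structures.
From mathcomp Require Import all_boot all_order all_algebra.
From mathcomp Require Import all_classical all_reals.
From mathcomp Require Import ereal sequences topology normedtype.
From mathcomp Require Import zify ring.
Set Implicit Arguments. Unset Strict Implicit. Unset Printing Implicit Defensive.
Import Order.TTheory GRing.Theory Num.Theory numFieldNormedType.Exports.

(* Lower bound by the adversary that never blocks.  At time n, a user of age
   at most k <= n was served in one of the last k slots, and one user is served
   per slot, so at most k users have age <= k.  Hence once n >= N - 1 the N ages
   dominate 1, 2, ..., N and sum to at least N (N + 1) / 2, whatever the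
   (randomized) policy; averaging over T slots loses only O(N^2 / T). *)

Lemma sum_ord_ltn (M a : nat) : \sum_(k < M) (k < a) = minn M a.
Proof.
elim: M => [|M IH]; first by rewrite big_ord0 min0n.
by rewrite big_ord_recr /= IH; lia.
Qed.

Lemma sum_ord_subn (M : nat) : 2 * \sum_(k < M) (M - k) = M * M.+1.
Proof.
elim: M => [|M IH]; first by rewrite big_ord0.
rewrite big_ord_recl subn0.
under eq_bigr do rewrite lift0 subSS.
by rewrite mulnDr IH; lia.
Qed.

Lemma sum_nat_pred_card (T : finType) (P : pred T) : \sum_x P x = #|[set x | P x]|.
Proof. by rewrite -sum1_card [RHS]big_mkcond; apply: eq_bigr => x _; rewrite inE; case: (P x). Qed.

Lemma sum_ge_triangular (n : nat) (a : 'I_n -> nat) :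
  (forall k, k < n -> #|[set i | a i <= k]| <= k) ->
  n * n.+1 <= 2 * \sum_i a i.
Proof.
move=> card_le; rewrite -sum_ord_subn leq_mul2l /=.
have card_gt k : \sum_i (k < a i) = n - #|[set i | a i <= k]|.
  rewrite sum_nat_pred_card.
  have -> : [set i | k < a i] = ~: [set i | a i <= k].
    by apply/setP => i; rewrite !inE -ltnNge.
  by have := cardsC [set i | a i <= k]; rewrite card_ord; lia.
apply: (@leq_trans (\sum_(k < n) \sum_i (k < a i))).
  by apply: leq_sum => k _; rewrite card_gt leq_sub2l ?card_le.
rewrite exchange_big /=; apply: leq_sum => i _.
by rewrite sum_ord_ltn geq_minr.
Qed.

Section Ages.
Variables (N Nsub : nat) (f : det_policy N Nsub) (sigma : blocking Nsub).

Lemma card_age_le n k : k <= n -> #|[set i | age f sigma i n <= k]| <= k.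
Proof.
elim: n k => [|n IH] [|k] //= le_kn; rewrite ?leqn0 ?cards_eq0.
- by apply/eqP/setP => i; rewrite !inE.
- by apply/eqP/setP => i; rewrite !inE; case: ifP.
have sub : [set i | age f sigma i n.+1 <= k.+1] \subset
           (f n.+1 sigma).1 |: [set i | age f sigma i n <= k].
  apply/fintype.subsetP => i; rewrite !inE /=.
  by case: ifP => [/andP[/eqP -> _]|_]; rewrite ?eqxx // ltnS => ->; rewrite orbT.
apply: leq_trans (subset_leq_card sub) _.
by apply: leq_trans (leq_card_setU _ _) _; rewrite cards1 ltnS IH.
Qed.

Lemma sum_age_ge n : N <= n.+1 -> N * N.+1 <= 2 * \sum_i age f sigma i n.
Proof. by move=> le_Nn; apply: sum_ge_triangular => k lt_kN; apply: card_age_le; lia. Qed.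

Lemma sum_sum_age_ge T :
  (T.+1 - N) * (N * N.+1) <= 2 * \sum_(1 <= t < T.+1) \sum_i age f sigma i t.-1.
Proof.
elim: T => [|T IH]; first by rewrite big_geq // muln0 leqn0 !muln_eq0; lia.
rewrite big_nat_recr //= mulnDr.
have [le_NT|lt_TN] := leqP N T.+1; last by have -> : T.+2 - N = 0 by lia.
by rewrite subSn // mulSn addnC leq_add ?sum_age_ge.
Qed.

End Ages.

Local Open Scope ring_scope.

Lemma avg_age_ge (R : realType) (N Nsub T : nat) (f : det_policy N Nsub) (sigma : blocking Nsub) :
  (0 < N)%N -> (0 < T)%N ->
  (N.+1)%:R / 2 * (1 - (N.-1)%:R / T%:R) <= avg_age R T f sigma.
Proof.
move=> N_gt0 T_gt0.
have := sum_sum_age_ge f sigma T; set S := (\sum_(1 <= t < T.+1) _)%N => S_ge.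
have -> : avg_age R T f sigma = S%:R / (T%:R * N%:R) :> R.
  rewrite /avg_age -mulr_sumr /S natr_sum.
  under [in RHS]eq_bigr do rewrite natr_sum.
  by rewrite invfM mulrA mulrC.
have -> : (N.+1)%:R / 2 * (1 - (N.-1)%:R / T%:R) =
    (T%:R - N.-1%:R) * (N%:R * N.+1%:R) / 2 / (T%:R * N%:R) :> R.
  by field; rewrite !pnatr_eq0 -!lt0n N_gt0 T_gt0.
rewrite ler_pM2r ?invr_gt0 ?mulr_gt0 ?ltr0n // ler_pdivrMr //.
apply: le_trans (_ : (T.+1 - N)%:R * (N%:R * N.+1%:R) <= _).
  by rewrite ler_wpM2r ?mulr_ge0 // lerBlDr -natrD ler_nat; lia.
by rewrite -!natrM ler_nat [(S * 2)%N]mulnC.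
Qed.

Definition unblocked (Nsub : nat) : blocking Nsub := fun _ _ => true.
Arguments unblocked : clear implicits.

Lemma feasible_unblocked (R : realType) (Nsub T : nat) (alpha : R) :
  0 <= alpha -> feasible T alpha (unblocked Nsub).
Proof.
have no_block t : [set j : 'I_Nsub | ~~ unblocked Nsub t j] = finset.set0.
  by apply/setP => j; rewrite !inE.
move=> alpha_ge0; split => [|t _]; rewrite ?no_block ?cards0 //.
by rewrite big1 => [|t _]; rewrite ?no_block ?cards0 ?mulr_ge0.
Qed.

Lemma achievable_ge (R : realType) (N Nsub T : nat) (sigma : blocking Nsub) (b v : R) :
  (forall f : det_policy N Nsub, b <= avg_age R T f sigma) ->
  achievable N T sigma v -> b <= v.
Proof.
move=> avg_ge [Omega [p [pol [p_ge0 [p_sum1 [_ ->]]]]]].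
rewrite -[b]mul1r -p_sum1 mulr_suml.
by apply: ler_sum => w _; rewrite ler_wpM2l.
Qed.

Lemma Delta_star_ge (R : realType) (N Nsub T : nat) (alpha b : R) :
  0 <= alpha -> (forall f : det_policy N Nsub, b <= avg_age R T f (unblocked Nsub)) ->
  (b%:E <= Delta_star N Nsub alpha T)%E.
Proof.
move=> alpha_ge0 avg_ge.
apply: le_trans (ereal_sup_ubound _); last first.
  by exists (unblocked Nsub); first exact: feasible_unblocked.
apply: le_ereal_inf_tmp => _ [v achv <-].
by rewrite lee_fin; apply: achievable_ge achv.
Qed.

Local Open Scope classical_set_scope.

Lemma limn_einf_le (R : realType) (u v : (\bar R)^nat) :
  (\forall n \near \oo, (u n <= v n)%E) -> (limn_einf u <= limn_einf v)%E.
Proof.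
move=> [M _ le_uv]; rewrite !limn_einf_lim.
apply: lee_lim; [exact: is_cvg_einfs | exact: is_cvg_einfs |].
exists M => // n /= le_Mn.
apply: le_ereal_inf_tmp => _ [k /= le_nk <-].
apply: le_trans (le_uv k _); last exact: leq_trans le_nk.
by apply: ereal_inf_lbound; exists k.
Qed.

Lemma cvg_mul_one_sub_div_natr (R : realType) (c d : R) :
  c * (1 - d / n%:R) @[n --> \oo] --> c.
Proof.
rewrite -[X in _ --> X]mulr1; apply: cvgMr.
rewrite -[X in _ --> X]subr0; apply: cvgB; first exact: cvg_cst.
rewrite -(mulr0 d); apply: cvgMr.
apply/gtr0_cvgV0; last exact: cvgr_idn.
by near=> n; rewrite ltr0n; near: n; exists 1%N.
Unshelve. all: by end_near.
Qed.

Theorem theorem10 (R : realType) (N Nsub : nat) (alpha : R) :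
  (0 < N)%N -> (2 <= Nsub)%N -> 0 < alpha < 1 ->
  (((N.+1)%:R / 2 : R)%:E <= limn_einf (fun T : nat => Delta_star N Nsub alpha T))%E.
Proof.
move=> N_gt0 _ /andP[alpha_gt0 _].
pose b T : R := (N.+1)%:R / 2 * (1 - (N.-1)%:R / T%:R).
have b_cvg : (fun T => (b T)%:E) @ \oo --> ((N.+1)%:R / 2)%:E.
  by apply: cvg_EFin; [exact: nearW | exact: cvg_mul_one_sub_div_natr].
rewrite -(cvg_limn_einf_sup b_cvg).1; apply: limn_einf_le.
exists 1%N => // T T_gt0; apply: Delta_star_ge (ltW alpha_gt0) _ => f.
exact: avg_age_ge.
Qed.
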